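(* Let $S$ denote the sorting problem on $n$ elements. Then $D_1(S,n)=\lceil 3n/2\rceil-2$.
   Context: Sorting problem $S$ on $n$ elements: the input is an assignment of $n$ distinct real numbers $a_1,\dots,a_n$ to $n$ labeled elements (equivalently, a total order on them); a query is a pair $\{i,j\}$ and its answer tells whether $a_i<a_j$; the goal is to determine the increasing order of the elements. $D_k(S,n)$ is defined by the following game between a Questioner and an Adversary. The Adversary chooses an input (the current input). The Questioner, who always knows the current input, asks queries one after another; each query is answered according to the current input. Between queries the Adversary may replace the current input by any other input consistent with all answers given so far, but at most $k$ times in total. The game ends as soon as the answers given determine the increasing order. $D_k(S,n)$ is the number of queries asked when the Questioner minimizes and the Adversary maximizes this number. *)

From mathcomp Require Import all_boot all_order.
From mathcomp Require Import all_fingroup.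

Set Implicit Arguments.
Unset Strict Implicit.
Unset Printing Implicit Defensive.

(* An input on n labelled elements 0..n-1 is encoded by the permutation
   [s : {perm 'I_n}] giving the rank of each element: a_i < a_j  <->  s i < s j.
   (Only the relative order of the a_i matters for the game.) *)

(* Answers given so far: a list of ordered pairs (i, j) meaning "a_i < a_j". *)
Definition answers (n : nat) := seq ('I_n * 'I_n).

Definition consistent n (A : answers n) (s : {perm 'I_n}) : bool :=
  all (fun p => s p.1 < s p.2) A.

(* The answers determine the increasing order: at most one (hence, since the
   current input is always consistent, exactly one) consistent input. *)
Definition determined n (A : answers n) : Prop :=
  forall s t : {perm 'I_n}, consistent A s -> consistent A t -> s = t.

Definition answer n (s : {perm 'I_n}) (i j : 'I_n) : 'I_n * 'I_n :=
  if s i < s j then (i, j) else (j, i).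

(* [win q A s k]: in the position where the answers so far are A, the current
   input is s and the Adversary has k changes left, the Questioner can force
   the game to end after at most q further queries. *)
Fixpoint win n (q : nat) (A : answers n) (s : {perm 'I_n}) (k : nat) : Prop :=
  match q with
  | 0 => determined A
  | q'.+1 =>
      determined A \/
      exists i j : 'I_n, i <> j /\
        let A' := answer s i j :: A in
        (* the Adversary keeps the current input *)
        win q' A' s k /\
        (* or replaces it (using one change) by any consistent input *)
        (0 < k -> forall t : {perm 'I_n}, consistent A' t -> win q' A' t k.-1)
  end.

(* [is_D k n d] : D_k(S, n) = d, i.e. d is the least number of queries the
   Questioner can guarantee against every Adversary (who chooses the initial
   input and then at most k changes). *)
Definition is_D (k n d : nat) : Prop :=
  (forall s : {perm 'I_n}, win d [::] s k) /\
  (forall q, (forall s : {perm 'I_n}, win q [::] s k) -> d <= q).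

From mathcomp Require Import all_boot all_order all_fingroup zify.

Set Implicit Arguments.
Unset Strict Implicit.
Unset Printing Implicit Defensive.

(* An input on N + 1 elements is a permutation [t] giving the rank of each
   element; two elements are adjacent in [t] when their ranks are consecutive.
   The answers determine the order exactly when they contain all N adjacent
   pairs of the (consistent) current input, since otherwise swapping an unasked
   adjacent pair gives a second consistent input.  A query settles at most one
   adjacent pair, so once the Adversary has no change left the Questioner needs
   exactly as many further queries as there are unasked adjacent pairs of the
   current input.

   Upper bound: the Questioner asks the adjacent pairs of the initial input [s]
   in rank order.  If the Adversary switches to [t] after m of them, the ranks
   in [t] along this chain increase by at least 1 per step and by at most N in
   total, so at least 2m - N steps are by exactly 1, i.e. adjacent pairs of
   [t]: at most min(N, 2(N - m)) <= N + N/2 - m queries remain.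

   Lower bound: the Adversary keeps [s] for the first N/2 queries and then
   switches to an input in which no two compared elements are adjacent.  It
   exists because e comparisons on at least 2e + 1 elements, all consistent with
   one order, have a linear extension with an element between the two sides of
   every comparison; then N more queries are needed. *)

Section SpreadEnumeration.
Variables (T : finType) (s : T -> nat).
Implicit Types (V X : {set T}) (E : seq (T * T)) (L : seq T).

Definition spread L E : Prop :=
  forall e, e \in E -> (index e.1 L).+1 < index e.2 L.

Definition touches E v : bool := has (fun e => (e.1 == v) || (e.2 == v)) E.

Lemma cons_setD1 v L V :
  v \in V -> uniq L -> L =i V :\ v -> uniq (v :: L) /\ v :: L =i V.
Proof.
move=> vV uL LV; split; first by rewrite /= uL LV setD11.
by move=> x; rewrite in_cons LV in_setD1; case: eqVneq => // ->.
Qed.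

Lemma spread_cons v x L E :
  {in E, forall e, e.2 != v} -> {in E, forall e, e.1 = v -> e.2 != x} ->
  spread (x :: L) [seq e <- E | e.1 != v] -> spread (v :: x :: L) E.
Proof.
move=> no_in out_x spE e eE.
have shift y : v != y -> index y (v :: x :: L) = (index y (x :: L)).+1.
  by rewrite /= => /negbTE ->.
rewrite (shift e.2) 1?eq_sym ?no_in //.
have [e1v|e1v] := eqVneq e.1 v.
  by rewrite e1v /= eqxx eq_sym (negbTE (out_x e eE e1v)).
by rewrite shift 1?eq_sym // ltnS; apply: spE; rewrite mem_filter e1v.
Qed.

Lemma card_touching E : #|[set v | touches E v]| <= (size E).*2.
Proof.
rewrite -addnn -{1}(size_map fst E) -(size_map snd E) -size_cat.
apply: leq_trans (card_size _); apply: subset_leq_card; apply/subsetP => v.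
rewrite inE => /hasP [e eE /orP [] /eqP <-]; rewrite mem_cat map_f ?orbT //.
Qed.

Lemma exists_untouched V X E :
  (size E).*2 + #|X| < #|V| -> exists2 w, w \in V :\: X & ~~ touches E w.
Proof.
move=> hV.
have : ~~ (V \subset [set v | touches E v] :|: X).
  apply: contraTN hV => /subset_leq_card; rewrite -leqNgt => /leq_trans; apply.
  by apply: leq_trans (leq_card_setU _ _) _; rewrite leq_add2r card_touching.
case/subsetPn => w wV; rewrite !inE negb_or => /andP [tw wX].
by exists w; rewrite // !inE wX.
Qed.

Lemma exists_source E e0 :
  e0 \in E -> {in E, forall e, s e.1 < s e.2} ->
  exists2 v, has (fun e => e.1 == v) E & {in E, forall e, e.2 != v}.
Proof.
move=> e0E sE.
have tail0 : e0.1 \in [seq e.1 | e <- E] by rewrite map_f.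
case: (arg_minnP s tail0) => v /mapP [e1 e1E ->] vmin.
exists e1.1; first by apply/hasP; exists e1.
move=> e eE; apply/eqP => e2v; have := vmin e.1 (map_f _ eE).
by have := sE e eE; rewrite e2v => /leq_trans lt /lt; rewrite ltnn.
Qed.

(* In the induction, [X] holds the successors of the element placed in front
   of the enumeration, which therefore may not come right after it. *)
Definition spread_enum V X E : Prop :=
  exists x L, [/\ uniq (x :: L), x :: L =i V, x \notin X & spread (x :: L) E].

Lemma spread_enum_cons V X E v X' :
  v \in V -> v \notin X -> {in E, forall e, e.2 != v} ->
  {in E, forall e, e.1 = v -> e.2 \in X'} ->
  spread_enum (V :\ v) X' [seq e <- E | e.1 != v] -> spread_enum V X E.
Proof.
move=> vV vX no_in out_v [x [L [uL LV xX' spL]]].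
have [uvL vLV] := cons_setD1 vV uL LV; exists v, (x :: L); split=> //.
apply: spread_cons => // e eE /(out_v e eE) e2X'.
by apply: contraNneq xX' => <-.
Qed.

Lemma card_out_neighbours E v : #|[set y | (v, y) \in E]| <= count (fun e => e.1 == v) E.
Proof.
rewrite -size_filter -(size_map snd); apply: leq_trans (card_size _).
apply: subset_leq_card; apply/subsetP => y; rewrite inE => vyE.
by apply/mapP; exists (v, y); rewrite // mem_filter eqxx.
Qed.

Lemma edges_setD1 V E v :
  {in E, forall e, (e.1 \in V) && (e.2 \in V)} ->
  {in E, forall e, (e.1 != v) && (e.2 != v)} ->
  {in E, forall e, (e.1 \in V :\ v) && (e.2 \in V :\ v)}.
Proof.
move=> EV Ev e eE; rewrite !in_setD1.
by case/andP: (Ev e eE) => -> ->; apply: EV.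
Qed.

Lemma exists_spread_enum V X E :
  {in E, forall e, s e.1 < s e.2} ->
  {in E, forall e, (e.1 \in V) && (e.2 \in V)} ->
  (size E).*2 + #|X| < #|V| -> spread_enum V X E.
Proof.
have [k] := ubnP #|V|; elim: k V X E => // k IH V X E ltVk sE EV hV.
have IHD v X' E' : v \in V -> {in E', forall e, s e.1 < s e.2} ->
    {in E', forall e, (e.1 \in V :\ v) && (e.2 \in V :\ v)} ->
    (size E').*2 + #|X'| < #|V| - 1 -> spread_enum (V :\ v) X' E'.
  move=> vV sE' E'V hV'; have := cardsD1 v V; rewrite vV add1n => cardV.
  by apply: (IH _ _ _ _ sE' E'V); move: ltVk hV'; rewrite cardV /=; lia.
have [X0|[y yX]] := set_0Vmem X; last first.
  have [w] := exists_untouched hV; rewrite inE => /andP [wX wV] /hasPn wE.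
  have {}wE : {in E, forall e, (e.1 != w) && (e.2 != w)}.
    by move=> e /wE; rewrite negb_or.
  apply: (@spread_enum_cons _ _ _ w set0) => //.
  - by move=> e /wE /andP [].
  - by move=> e /wE /andP [/eqP].
  rewrite (all_filterP _); last by apply/allP => e /wE /andP [].
  apply: IHD => //; first exact: edges_setD1.
  have : 0 < #|X| by apply/card_gt0P; exists y.
  by move: hV; rewrite cards0 -!addnn; lia.
case: E sE EV hV => [|e0 E'] sE EV hV.
  have [x] := exists_untouched hV; rewrite inE => /andP [xX xV] _.
  have [uL LV] := cons_setD1 xV (enum_uniq (mem (V :\ x))) (mem_enum _).
  by exists x, (enum (V :\ x)); split.
set E := e0 :: E' in sE EV hV *.
have [v vtail no_in] := exists_source (mem_head e0 E') sE.
have vV : v \in V by case/hasP: vtail => e eE /eqP <-; case/andP: (EV e eE).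
apply: (@spread_enum_cons _ _ _ v [set y | (v, y) \in E]) => //.
- by rewrite X0 inE.
- by move=> [a b] abE /= <-; rewrite inE.
apply: IHD => //.
- by move=> e; rewrite mem_filter => /andP [_ /sE].
- apply: edges_setD1 => e; rewrite mem_filter => /andP [e1v eE].
    exact: EV.
  by rewrite e1v no_in.
have sizeE : size [seq e <- E | e.1 != v] + count (fun e => e.1 == v) E = size E.
  by rewrite size_filter addnC -(count_predC (fun e => e.1 == v)).
have d_gt0 : 0 < count (fun e => e.1 == v) E by rewrite -has_count.
move: hV d_gt0 (card_out_neighbours E v); rewrite X0 cards0 -!addnn -sizeE.
(* the two occurrences of [size _] differ in how their element type is
   elaborated, which lia does not see through *)
by move: (size _) => a; lia.
Qed.

End SpreadEnumeration.

Lemma exists_perm_index n (L : seq 'I_n) :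
  uniq L -> (forall x, x \in L) ->
  exists t : {perm 'I_n}, forall x, t x = index x L :> nat.
Proof.
move=> uL L_all.
have sizeL : size L = n.
  rewrite -(card_uniqP uL) -[RHS]card_ord; exact: eq_card.
have index_lt x : index x L < n by rewrite -[X in _ < X]sizeL index_mem.
have inj : injective (fun x => Ordinal (index_lt x)).
  by move=> x y [] /(congr1 (nth x L)); rewrite !nth_index.
by exists (perm inj) => x; rewrite permE.
Qed.

Lemma count_gaps (f : nat -> nat) i m :
  (forall k, i <= k < i + m -> f k < f k.+1) ->
  f i + m + count (fun k => f k.+1 != (f k).+1) (iota i m) <= f (i + m).
Proof.
elim: m => [|m IH] incr; first by rewrite !addn0.
have {}IH : f i + m + count (fun k => f k.+1 != (f k).+1) (iota i m) <= f (i + m).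
  by apply: IH => k hk; apply: incr; lia.
have step : f (i + m) < f (i + m).+1 by apply: incr; lia.
rewrite -[in iota _ _]addn1 iotaD count_cat /= addn0 !addnS.
by case: eqP => /= eq_step; lia.
Qed.

Section SortingGame.
Variable N : nat.
Implicit Types (s t u : {perm 'I_N.+1}) (A : answers N.+1) (p : 'I_N.+1 * 'I_N.+1).

Definition adjacent t p : bool := t p.2 == (t p.1).+1 :> nat.

Definition missing A t := [set p | adjacent t p & p \notin A].

Definition adj_pair t k : 'I_N.+1 * 'I_N.+1 :=
  ((t^-1)%g (inord k), (t^-1)%g (inord k.+1)).

Lemma adj_pair1 t k : k <= N -> t (adj_pair t k).1 = k :> nat.
Proof. by move=> le_kN; rewrite permKV inordK. Qed.

Lemma adj_pair2 t k : k < N -> t (adj_pair t k).2 = k.+1 :> nat.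
Proof. by move=> lt_kN; rewrite permKV inordK. Qed.

Lemma adjacent_adj_pair t k : k < N -> adjacent t (adj_pair t k).
Proof. by move=> lt_kN; rewrite /adjacent adj_pair2 // adj_pair1 // ltnW. Qed.

Lemma adjacentP t p : adjacent t p -> t p.1 < N /\ p = adj_pair t (t p.1).
Proof.
move=> /eqP adj_p; have lt_p1 : t p.1 < N by have := ltn_ord (t p.2); rewrite adj_p.
split=> //; case: p adj_p lt_p1 => x y /= adj_xy lt_xN.
by rewrite /adj_pair -adj_xy !inord_val !permK.
Qed.

Lemma adj_pair_inj t : {in [pred k | k <= N] &, injective (adj_pair t)}.
Proof.
by move=> k l le_kN le_lN /(congr1 (fun p => val (t p.1))); rewrite /= !adj_pair1.
Qed.

Lemma card_adjacent t : #|[set p | adjacent t p]| = N.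
Proof.
have -> : [set p | adjacent t p] = [set adj_pair t k | k : 'I_N].
  apply/setP => p; rewrite inE; apply/idP/imsetP => [/adjacentP [lt_p1 ->]|[k _ ->]].
    by exists (Ordinal lt_p1).
  exact: adjacent_adj_pair.
rewrite card_imset ?card_ord // => k l /adj_pair_inj; rewrite !inE => eq_kl.
by apply: val_inj; apply: eq_kl; rewrite ltnW.
Qed.

Lemma perm_val_eq t x y : (t x == t y :> nat) = (x == y).
Proof. by rewrite val_eqE (inj_eq perm_inj). Qed.

Lemma answer_lt t i j : i <> j -> t (answer t i j).1 < t (answer t i j).2.
Proof.
move=> neq_ij; rewrite /answer; case: ifP => //= /negbT.
rewrite -leqNgt leq_eqVlt => /orP [/eqP/val_inj/perm_inj eq_ji|//].
by case: neq_ij.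
Qed.

Lemma consistent_answer A t i j :
  i <> j -> consistent A t -> consistent (answer t i j :: A) t.
Proof. by move=> neq_ij cAt; rewrite /consistent /= answer_lt. Qed.

Lemma consistent_swap A t p :
  adjacent t p -> p \notin A -> consistent A t ->
  consistent A (tperm p.1 p.2 * t)%g.
Proof.
case: p => x y /eqP /= adj_xy yxA /allP cAt; apply/allP => [[a b] abA] /=.
have := cAt _ abA; rewrite !permM /=.
have neq_t z w : z != w -> (t z : nat) <> t w.
  by move=> /negbTE nzw /eqP; rewrite perm_val_eq nzw.
(* the swap moves x and y by one rank, which only their own comparison sees *)
case: (tpermP x y a) => [ax|ay|/eqP nax /eqP nay];
  case: (tpermP x y b) => [bx|b_y|/eqP nbx /eqP nby];
  rewrite ?ax ?ay ?bx ?b_y ?adj_xy; try lia.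
- by move: abA yxA; rewrite ax b_y => ->.
all: try have := neq_t _ _ nax; try have := neq_t _ _ nay;
  try have := neq_t _ _ nbx; try have := neq_t _ _ nby; lia.
Qed.

Lemma missing0_determined A t : missing A t = set0 -> determined A.
Proof.
move=> miss0.
have adjA k : k < N -> adj_pair t k \in A.
  move=> lt_kN; apply: contraT => kA.
  by rewrite -(in_set0 (adj_pair t k)) -miss0 inE adjacent_adj_pair.
suff eq_t u : consistent A u -> u = t by move=> u v /eq_t -> /eq_t ->.
move=> /allP cAu; apply/permP => x; apply: val_inj => /=.
pose f k : nat := u ((t^-1)%g (inord k)).
have incr k : k < N -> f k < f k.+1 by move=> /adjA /cAu.
have ltxN := ltn_ord (t x).
have below : f 0 + t x <= f (t x).
  have := @count_gaps f 0 (t x); rewrite add0n => gaps.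
  by apply: leq_trans (leq_addr _ _) (gaps _) => k hk; apply: incr; lia.
have above : f (t x) + (N - t x) <= f N.
  have := @count_gaps f (t x) (N - t x); rewrite subnKC // => gaps.
  by apply: leq_trans (leq_addr _ _) (gaps _) => k hk; apply: incr; lia.
have fN : f N <= N by rewrite -ltnS ltn_ord.
have : f (t x) = u x by rewrite /f inord_val permK.
lia.
Qed.

Lemma determined_missing0 A t : determined A -> consistent A t -> missing A t = set0.
Proof.
move=> detA cAt; apply/setP => p; rewrite inE in_set0; apply/negP => /andP [adj_p pA].
have := detA _ _ (consistent_swap adj_p pA cAt) cAt.
move=> /(congr1 (fun u : {perm _} => u p.1)); rewrite permM tpermL => /perm_inj eq_p.
by move: adj_p; rewrite /adjacent eq_p => /eqP/n_Sn.
Qed.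

Lemma card_missing_cons A t p : #|missing A t| <= #|missing (p :: A) t| + 1.
Proof.
have sub : missing A t \subset p |: missing (p :: A) t.
  by apply/subsetP => q; rewrite !inE negb_or; case: eqP.
by apply: leq_trans (subset_leq_card sub) _; rewrite cardsU1 addnC leq_add2l leq_b1.
Qed.

Lemma missing_cons A t p : missing (p :: A) t = missing A t :\ p.
Proof. by apply/setP => q; rewrite !inE negb_or andbCA. Qed.

Lemma card_missing A t :
  #|missing A t| + #|[set p | adjacent t p & p \in A]| = N.
Proof.
rewrite -[RHS](card_adjacent t) -(cardsID [set p in A] [set p | adjacent t p]) addnC.
by congr (_ + _); congr #|pred_of_set _|; apply/setP => p; rewrite !inE andbC.
Qed.

Lemma card_missing_ge A t : N <= #|missing A t| + size A.
Proof.
rewrite -[X in X <= _](card_missing A t) leq_add2l -cardsE.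
apply: leq_trans (card_size A); apply: subset_leq_card.
by apply/subsetP => p; rewrite !inE => /andP [].
Qed.

Lemma win_determined q A s k : determined A -> win q A s k.
Proof. by case: q => [|q] /=; [|left]. Qed.

Lemma win_missing_lb q A t k : consistent A t -> win q A t k -> #|missing A t| <= q.
Proof.
elim: q A => [|q IH] A cAt /=.
  by move/determined_missing0/(_ cAt) ->; rewrite cards0.
case=> [/determined_missing0/(_ cAt) -> | [i [j [neq_ij [stay _]]]]].
  by rewrite cards0.
apply: leq_trans (card_missing_cons A t (answer t i j)) _.
by rewrite addn1 ltnS IH // consistent_answer.
Qed.

Lemma win_missing_ub q A t : consistent A t -> #|missing A t| <= q -> win q A t 0.
Proof.
elim: q A => [|q IH] A cAt miss_le /=.
  by apply: (@missing0_determined _ t); apply/cards0_eq/eqP; rewrite -leqn0.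
have [miss0|[p]] := set_0Vmem (missing A t).
  by left; exact: missing0_determined miss0.
rewrite inE => /andP [adj_p pA]; right.
have lt_p : t p.1 < t p.2 by rewrite (eqP adj_p).
exists p.1, p.2; split=> [eq_p|]; first by move: lt_p; rewrite eq_p ltnn.
have -> : answer t p.1 p.2 = p by rewrite /answer lt_p; case: p {adj_p pA lt_p}.
split=> [|//]; apply: IH; first by rewrite /consistent /= lt_p.
by move: miss_le; rewrite missing_cons (cardsD1 p) inE adj_p pA.
Qed.

Lemma card_missing_prefix A s t m :
  m <= N -> (forall k, k < m -> adj_pair s k \in A) -> consistent A t ->
  #|missing A t| + m.*2 <= N.*2.
Proof.
move=> le_mN prefA /allP cAt.
pose f k : nat := t ((s^-1)%g (inord k)).
have incr k : 0 <= k < 0 + m -> f k < f k.+1 by move=> /andP [_ /prefA /cAt].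
have := count_gaps incr; rewrite add0n => gaps.
have fm : f m <= N by rewrite -ltnS ltn_ord.
set units := [seq k <- iota 0 m | f k.+1 == (f k).+1].
have size_units : size units + count (fun k => f k.+1 != (f k).+1) (iota 0 m) = m.
  by rewrite size_filter (count_predC (fun k => f k.+1 == (f k).+1)) size_iota.
have units_answered : size units <= #|[set p | adjacent t p & p \in A]|.
  rewrite -(size_map (adj_pair s)) -(card_uniqP _).
    apply: subset_leq_card; apply/subsetP => p /mapP [k].
    rewrite mem_filter mem_iota => /andP [unit_k /andP [_ /prefA kA]] ->.
    by rewrite inE kA andbT.
  rewrite map_inj_in_uniq ?filter_uniq ?iota_uniq // => k l.
  rewrite !mem_filter !mem_iota => /andP [_ hk] /andP [_ hl].
  by apply: adj_pair_inj; rewrite inE; lia.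
have := card_missing A t; rewrite -!addnn; lia.
Qed.

Lemma questioner_wins A s j :
  j <= N -> (forall k, k < j -> adj_pair s k \in A) -> win (N + N %/ 2 - j) A s 1.
Proof.
move=> le_jN; move Hr: (N - j) => r; elim: r j A le_jN Hr => [|r IH] j A le_jN Hr prefA.
  apply/win_determined/(@missing0_determined _ s)/setP => p; rewrite inE in_set0.
  by apply/negP => /andP [/adjacentP [lt_p1 ->]]; rewrite prefA //; lia.
have lt_jN : j < N by lia.
have -> : N + N %/ 2 - j = (N + N %/ 2 - j.+1).+1 by lia.
have lt_j : s (adj_pair s j).1 < s (adj_pair s j).2.
  by rewrite adj_pair1 ?adj_pair2 // ltnW.
right; exists (adj_pair s j).1, (adj_pair s j).2.
split=> [eq_j|]; first by move: lt_j; rewrite eq_j ltnn.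
have -> : answer s (adj_pair s j).1 (adj_pair s j).2 = adj_pair s j.
  by rewrite /answer lt_j.
have prefA' k : k < j.+1 -> adj_pair s k \in adj_pair s j :: A.
  by rewrite ltnS leq_eqVlt in_cons => /orP [/eqP -> | /prefA ->]; rewrite ?eqxx ?orbT.
split=> [|_ t cAt]; first by apply: IH => //; lia.
apply: win_missing_ub => //.
have := card_missing_prefix lt_jN prefA' cAt; have := card_missing (adj_pair s j :: A) t.
rewrite -!addnn; lia.
Qed.

Lemma exists_spread_perm A s :
  consistent A s -> (size A).*2 < N.+1 -> exists2 t, consistent A t & #|missing A t| = N.
Proof.
move=> /allP cAs sizeA.
have [||x [L [uL LV _ spL]]] :=
  @exists_spread_enum _ (fun x => val (s x)) setT set0 A cAs.
- by move=> e _; rewrite !inE.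
- by rewrite cards0 cardsT card_ord addn0.
have [t t_index] := exists_perm_index uL (fun y => etrans (LV y) (in_setT y)).
exists t; first by apply/allP => e /spL; rewrite !t_index => /ltnW.
have := card_missing A t; suff -> : [set p | adjacent t p & p \in A] = set0.
  by rewrite cards0 addn0.
apply/setP => p; rewrite !inE; apply/andP => -[/eqP adj_p /spL].
by rewrite -!t_index adj_p ltnn.
Qed.

Lemma undetermined_small A t : consistent A t -> size A < N -> ~ determined A.
Proof.
move=> cAt small /determined_missing0 /(_ cAt) miss0.
by have := card_missing_ge A t; rewrite miss0 cards0; lia.
Qed.

Lemma adversary_wins q A s :
  consistent A s -> size A < N %/ 2 -> win q A s 1 -> N %/ 2 + N <= size A + q.
Proof.
have small_undet A' : consistent A' s -> size A' < N %/ 2 -> ~ determined A'.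
  by move=> cA's small; apply: undetermined_small cA's (leq_trans small (leq_div N 2)).
elim: q A => [|q IH] A cAs small /=; first by move/(small_undet _ cAs small).
case=> [/(small_undet _ cAs small) [] | [i [j [neq_ij [stay switch]]]]].
set A' := answer s i j :: A in stay switch.
have cA's : consistent A' s := consistent_answer neq_ij cAs.
have [small'|big'] := ltnP (size A') (N %/ 2).
  by have := IH _ cA's small' stay; rewrite /= addSnnS.
have sizeA' : size A' = N %/ 2 by move: big' small => /=; lia.
have [|t cA't miss_t] := exists_spread_perm cA's; first by rewrite sizeA'; lia.
by have := win_missing_lb cA't (switch isT t cA't); rewrite miss_t /= in sizeA' *; lia.
Qed.

Lemma lower_bound q s : win q [::] s 1 -> N + N %/ 2 <= q.
Proof.
move=> win_q; have [N2_0|N2_pos] := posnP (N %/ 2).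
  rewrite N2_0 addn0; apply: leq_trans (win_missing_lb (isT : consistent [::] s) win_q).
  by have /= := card_missing_ge [::] s; rewrite addn0.
by have /= := adversary_wins (isT : consistent [::] s) N2_pos win_q; lia.
Qed.

End SortingGame.

Theorem proposition4 (n : nat) (hn : 1 <= n) :
  is_D 1 n ((3 * n).+1 %/ 2 - 2).
Proof.
case: n hn => [//|N] _.
have -> : (3 * N.+1).+1 %/ 2 - 2 = N + N %/ 2 by lia.
split=> [s|q win_q]; last exact: lower_bound (win_q 1%g).
by rewrite -[N + _]subn0; apply: questioner_wins => // k; rewrite ltn0.
Qed.
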